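(* Under the standing setup and the algorithm/assumptions described in the context, $\displaystyle\liminf_{n\to\infty}\mathcal{M}_{\bar\gamma}^{F_n,\phi}(x_n)=0$.
   Context: Standing setup: $\mathcal{X},\mathcal{Z}$ finite-dimensional real Hilbert spaces; $\phi:\mathcal{X}\to\mathbb{R}\cup\{+\infty\}$ proper lower semicontinuous convex; $h:\mathcal{X}\to\mathbb{R}$ differentiable with $\nabla h$ Lipschitz on $\mathrm{dom}\,\phi$; $\mathfrak{S}:\mathcal{X}\to\mathcal{Z}$ continuously differentiable; $g:\mathcal{Z}\to\mathbb{R}$ Lipschitz with constant $L_g>0$ and $\eta$-weakly convex ($g+\frac\eta2\|\cdot\|^2$ convex, $\eta>0$); $F:=h+g\circ\mathfrak{S}$ and $\mathrm{argmin}_x(F+\phi)\ne\emptyset$. Notation: $\mathrm{prox}_{\gamma\phi}(\bar x)=\mathrm{argmin}_x(\phi(x)+\frac1{2\gamma}\|x-\bar x\|^2)$; Moreau envelope ${}^{\mu}g(\bar z)=\min_z(g(z)+\frac1{2\mu}\|z-\bar z\|^2)$ for $\mu\in(0,\eta^{-1})$. $F_n:=h+{}^{\mu_n}g\circ\mathfrak{S}$, and $\mathcal{M}_\gamma^{F_n,\phi}(x)=\|(x-\mathrm{prox}_{\gamma\phi}(x-\gamma\nabla F_n(x)))/\gamma\|$. Algorithm and assumptions: fix $x_1\in\mathrm{dom}\,\phi$ and $c\in(0,1)$. (a) $(\mu_n)\subset(0,\frac{1}{2\eta}]$ with $\mu_n\to0$, $\sum_n\mu_n=+\infty$, and $M^{-1}\le\mu_{n+1}/\mu_n\le1$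 for some $M\ge1$. (b) Each $\nabla F_n$ is Lipschitz on $\mathrm{dom}\,\phi$ with constant $L_{\nabla F_n}=\varpi_1+\varpi_2\mu_n^{-1}$, $\varpi_1\ge0$, $\varpi_2>0$ fixed. (c) $\gamma_n>0$ satisfies $(F_n+\phi)(\mathrm{prox}_{\gamma_n\phi}(x_n-\gamma_n\nabla F_n(x_n)))\le(F_n+\phi)(x_n)-c\gamma_n(\mathcal{M}_{\gamma_n}^{F_n,\phi}(x_n))^2$ and $\beta L_{\nabla F_n}^{-1}\le\gamma_n\le\bar\gamma$ for fixed $\beta,\bar\gamma>0$. (d) $x_{n+1}=\mathrm{prox}_{\gamma_n\phi}(x_n-\gamma_n\nabla F_n(x_n))$. *)

From HB Require Import structures.
From mathcomp Require Import all_boot all_order all_algebra.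
From mathcomp Require Import all_classical all_reals all_analysis.
Set Implicit Arguments. Unset Strict Implicit. Unset Printing Implicit Defensive.
Import Order.TTheory GRing.Theory Num.Theory.
Import numFieldNormedType.Exports.
Local Open Scope classical_set_scope.
Local Open Scope ring_scope.

(* Finite-dimensional real Hilbert spaces are modelled as 'rV[R]_d with the
   standard (Euclidean) inner product and norm. *)
Definition dotp {R : realType} {d : nat} (u v : 'rV[R]_d) : R := (u *m v^T) 0 0.
Definition enorm {R : realType} {d : nat} (u : 'rV[R]_d) : R := Num.sqrt (dotp u u).

Definition grad {R : realType} {d : nat} (f : 'rV[R]_d -> R^o) (x : 'rV[R]_d)
  : 'rV[R]_d := \row_i ('d f x (delta_mx 0 i : 'rV[R]_d)).

Definition dom {R : realType} {d : nat} (phi : 'rV[R]_d -> \bar R) : set 'rV[R]_d :=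
  [set x | (phi x < +oo)%E].

Definition proper_fun {R : realType} {d : nat} (phi : 'rV[R]_d -> \bar R) : Prop :=
  (exists x, (phi x < +oo)%E) /\ (forall x, (-oo < phi x)%E).

Definition econvex {R : realType} {d : nat} (phi : 'rV[R]_d -> \bar R) : Prop :=
  forall (x y : 'rV[R]_d) (t : R), 0 < t < 1 ->
    (phi (t *: x + (1 - t) *: y)%R <= t%:E * phi x + (1 - t)%:E * phi y)%E.

Definition rconvex {R : realType} {d : nat} (f : 'rV[R]_d -> R) : Prop :=
  forall (x y : 'rV[R]_d) (t : R), 0 <= t <= 1 ->
    f (t *: x + (1 - t) *: y) <= t * f x + (1 - t) * f y.

Definition is_prox {R : realType} {d : nat} (gamma : R) (phi : 'rV[R]_d -> \bar R)
  (xb p : 'rV[R]_d) : Prop :=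
  forall x, (phi p + ((2 * gamma)^-1 * enorm (p - xb)%R ^+ 2)%:E
             <= phi x + ((2 * gamma)^-1 * enorm (x - xb)%R ^+ 2)%:E)%E.

Definition prox {R : realType} {d : nat} (gamma : R) (phi : 'rV[R]_d -> \bar R)
  (xb : 'rV[R]_d) : 'rV[R]_d := xget 0 [set p | is_prox gamma phi xb p].

Definition moreau {R : realType} {p : nat} (mu : R) (g : 'rV[R]_p -> R)
  (zb : 'rV[R]_p) : R :=
  inf [set g z + (2 * mu)^-1 * enorm (z - zb) ^+ 2 | z in [set: 'rV[R]_p]].

Definition Fmu {R : realType} {m p : nat} (mu : R) (h : 'rV[R]_m -> R)
  (g : 'rV[R]_p -> R) (S : 'rV[R]_m -> 'rV[R]_p) : 'rV[R]_m -> R :=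
  fun x => h x + moreau mu g (S x).

Definition Mres {R : realType} {m : nat} (gamma : R) (F : 'rV[R]_m -> R)
  (phi : 'rV[R]_m -> \bar R) (x : 'rV[R]_m) : R :=
  enorm (gamma^-1 *: (x - prox gamma phi (x - gamma *: grad F x))).

From HB Require Import structures.
From mathcomp Require Import all_boot all_order all_algebra.
From mathcomp Require Import all_classical all_reals all_analysis.
From mathcomp Require Import ring lra.
Import Order.TTheory GRing.Theory Num.Theory.
Import numFieldNormedType.Exports.
Local Open Scope classical_set_scope.
Local Open Scope ring_scope.
Set Implicit Arguments. Unset Strict Implicit. Unset Printing Implicit Defensive.

(* Put [V_n = F_n(x_n) + phi(x_n) + mu_n Lg^2/2].  Since
   [^mu' g <= ^mu g + (mu - mu') Lg^2/2] for [mu' <= mu], the sufficient-decrease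
   condition gives [V_(n+1) <= V_n - c gamma_n M_n^2], [M_n] the residual at [gamma_n];
   and [^mu g >= g - mu Lg^2/2] bounds [V_n] below by [min (F + phi)].  So
   [sum gamma_n M_n^2 < oo].  The prox residual [gamma^-1 |x - prox_gamma (x - gamma v)|]
   is nonincreasing in [gamma] and [gamma_n >= kappa mu_n] by (b)-(c), so
   [sum mu_n Mbar_n^2 < oo] for the residual [Mbar_n] at [gbar]; as [sum mu_n = oo],
   [Mbar_n] drops below any [e > 0] infinitely often.  Proximal points exist since
   [phi + |. - y|^2/(2 gamma)] is lower semicontinuous and coercive, [phi] having at
   most linear decay. *)

Section EuclideanNorm.
Context {R : realType} {d : nat}.
Implicit Types u v w : 'rV[R]_d.

Lemma dotpE u v : dotp u v = \sum_i u 0 i * v 0 i.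
Proof. by rewrite /dotp !mxE; apply: eq_bigr => i _; rewrite !mxE. Qed.

Lemma dotpC u v : dotp u v = dotp v u.
Proof. by rewrite !dotpE; apply: eq_bigr => i _; rewrite mulrC. Qed.

Lemma dotpDl u v w : dotp (u + v) w = dotp u w + dotp v w.
Proof. by rewrite !dotpE -big_split; apply: eq_bigr => i _; rewrite !mxE mulrDl. Qed.

Lemma dotpZl a u v : dotp (a *: u) v = a * dotp u v.
Proof. by rewrite !dotpE mulr_sumr; apply: eq_bigr => i _; rewrite !mxE mulrA. Qed.

Lemma dotpNl u v : dotp (- u) v = - dotp u v.
Proof. by rewrite -scaleN1r dotpZl mulN1r. Qed.

Lemma dotpBl u v w : dotp (u - v) w = dotp u w - dotp v w.
Proof. by rewrite dotpDl dotpNl. Qed.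

Lemma dotpDr u v w : dotp w (u + v) = dotp w u + dotp w v.
Proof. by rewrite dotpC dotpDl !(dotpC w). Qed.

Lemma dotpZr a u v : dotp v (a *: u) = a * dotp v u.
Proof. by rewrite dotpC dotpZl dotpC. Qed.

Lemma dotpBr u v w : dotp w (u - v) = dotp w u - dotp w v.
Proof. by rewrite dotpC dotpBl !(dotpC w). Qed.

Lemma dotpp_ge0 u : 0 <= dotp u u.
Proof. by rewrite dotpE; apply: sumr_ge0 => i _; rewrite -expr2 sqr_ge0. Qed.

Lemma enorm_ge0 u : 0 <= enorm u.
Proof. exact: sqrtr_ge0. Qed.

Lemma sqr_enorm u : enorm u ^+ 2 = dotp u u.
Proof. by rewrite /enorm sqr_sqrtr // dotpp_ge0. Qed.

Lemma enormZ a u : enorm (a *: u) = `|a| * enorm u.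
Proof. by rewrite /enorm dotpZl dotpZr mulrA -expr2 sqrtrM ?sqr_ge0 // sqrtr_sqr. Qed.

Lemma enormB u v : enorm (u - v) = enorm (v - u).
Proof. by rewrite -opprB -scaleN1r enormZ normrN normr1 mul1r. Qed.

Lemma sqr_enormDZ u v (t : R) :
  enorm (u + t *: v) ^+ 2 = enorm u ^+ 2 + 2 * t * dotp u v + t ^+ 2 * dotp v v.
Proof. by rewrite !sqr_enorm dotpDl !dotpDr !dotpZl !dotpZr (dotpC v u); ring. Qed.

Lemma coord_le_enorm u i : `|u 0 i| <= enorm u.
Proof.
rewrite -(sqrtr_sqr (u 0 i)) /enorm ler_wsqrtr // dotpE (bigD1 i) //= -expr2.
by rewrite lerDl sumr_ge0 // => j _; rewrite -expr2 sqr_ge0.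
Qed.

Lemma dotp_le_enorm u v : dotp u v <= enorm u * enorm v.
Proof.
have quad t : 0 <= dotp u u - 2 * t * dotp u v + t ^+ 2 * dotp v v.
  have := dotpp_ge0 (u - t *: v).
  by rewrite dotpBl !dotpBr !dotpZl !dotpZr (dotpC v u); lra.
have uu := sqr_enorm u; have vv := sqr_enorm v.
have u0 := enorm_ge0 u; have v0 := enorm_ge0 v.
have [v_eq0|v_neq0] := eqVneq (dotp v v) 0.
  (* the discriminant argument degenerates: the quadratic in [t] is affine *)
  have -> : enorm v = 0 by apply/eqP; rewrite -sqrf_eq0 vv v_eq0.
  rewrite mulr0 leNgt; apply/negP => uv_gt0.
  have := quad ((dotp u u + 1) / (2 * dotp u v)); rewrite v_eq0 mulr0 addr0.
  have -> : 2 * ((dotp u u + 1) / (2 * dotp u v)) * dotp u v = dotp u u + 1.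
    by field; rewrite gt_eqF.
  lra.
have vv_gt0 : 0 < dotp v v by rewrite lt_def v_neq0 dotpp_ge0.
have := quad (dotp u v / dotp v v).
have -> : dotp u u - 2 * (dotp u v / dotp v v) * dotp u v +
    (dotp u v / dotp v v) ^+ 2 * dotp v v =
    (dotp u u * dotp v v - dotp u v ^+ 2) / dotp v v.
  by field; rewrite gt_eqF.
rewrite pmulr_lge0 ?invr_gt0 // -uu -vv -exprMn subr_ge0 => sq_le.
have := mulr_ge0 u0 v0; nra.
Qed.

Lemma ler_enormD u v : enorm (u + v) <= enorm u + enorm v.
Proof.
have uv := dotp_le_enorm u v.
have : enorm (u + v) ^+ 2 <= (enorm u + enorm v) ^+ 2.
  by rewrite sqr_enorm dotpDl !dotpDr (dotpC v u) sqrrD !sqr_enorm; lra.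
by rewrite ler_sqr // nnegrE ?addr_ge0 ?enorm_ge0.
Qed.

End EuclideanNorm.

Lemma ler_young {R : realFieldType} (mu a b : R) : 0 < mu ->
  a * b <= (2 * mu)^-1 * a ^+ 2 + mu * b ^+ 2 / 2.
Proof.
move=> mu_gt0; suff : 0 <= (2 * mu)^-1 * (a - mu * b) ^+ 2.
  have -> : (2 * mu)^-1 * (a - mu * b) ^+ 2 =
      (2 * mu)^-1 * a ^+ 2 + mu * b ^+ 2 / 2 - a * b by field; rewrite gt_eqF.
  by rewrite subr_ge0.
by rewrite mulr_ge0 ?sqr_ge0 // invr_ge0 mulr_ge0 // ltW.
Qed.

Section Moreau.
Context {R : realType} {p : nat} (g : 'rV[R]_p -> R) (Lg : R).
Hypothesis g_lip : forall z z', `|g z - g z'| <= Lg * enorm (z - z').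

Lemma moreau_objective_lb mu zb z : 0 < mu ->
  g zb - mu * Lg ^+ 2 / 2 <= g z + (2 * mu)^-1 * enorm (z - zb) ^+ 2.
Proof.
move=> mu_gt0; have := ler_young (enorm (z - zb)) Lg mu_gt0.
have := g_lip zb z; rewrite enormB ler_norml; lra.
Qed.

Let moreau_set mu zb :=
  [set g z + (2 * mu)^-1 * enorm (z - zb) ^+ 2 | z in [set: 'rV[R]_p]].

Let moreau_set_has_inf mu zb : 0 < mu -> has_inf (moreau_set mu zb).
Proof.
move=> mu_gt0; split; first by exists (g zb + (2 * mu)^-1 * enorm (zb - zb) ^+ 2), zb.
by exists (g zb - mu * Lg ^+ 2 / 2) => _ [z _ <-]; exact: moreau_objective_lb.
Qed.

Lemma moreau_ge mu zb : 0 < mu -> g zb - mu * Lg ^+ 2 / 2 <= moreau mu g zb.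
Proof.
move=> mu_gt0; apply: lb_le_inf; first by case: (moreau_set_has_inf zb mu_gt0).
by move=> _ [z _ <-]; exact: moreau_objective_lb.
Qed.

Lemma moreau_le mu zb z : 0 < mu ->
  moreau mu g zb <= g z + (2 * mu)^-1 * enorm (z - zb) ^+ 2.
Proof.
by move=> mu_gt0; apply: ge_inf; [case: (moreau_set_has_inf zb mu_gt0)|exists z].
Qed.

(* Compare with the point [zb + (mu'/mu) (z - zb)], [z] a near-minimiser for [mu]. *)
Lemma moreau_le_shrink mu mu' zb : 0 < mu' -> mu' <= mu ->
  moreau mu' g zb <= moreau mu g zb + (mu - mu') * Lg ^+ 2 / 2.
Proof.
move=> mu'_gt0 mu'_le; have mu_gt0 : 0 < mu by apply: lt_le_trans mu'_le.
apply/ler_addgt0Pr => e e_gt0.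
have [_ [z _ <-] z_near] : exists2 v, moreau_set mu zb v & v < moreau mu g zb + e.
  exact: inf_adherent (moreau_set_has_inf zb mu_gt0).
pose t := mu' / mu; pose w := zb + t *: (z - zb).
have t_gt0 : 0 < t by rewrite divr_gt0.
have t_le1 : t <= 1 by rewrite ler_pdivrMr // mul1r.
have mu'E : mu' = t * mu by rewrite /t divfK // gt_eqF.
set r := enorm (z - zb) in z_near *.
have wzb : enorm (w - zb) = t * r by rewrite /w addrC addKr enormZ ger0_norm // ltW.
have wz : enorm (w - z) = (1 - t) * r.
  rewrite -[1 - t]ger0_norm ?subr_ge0 // -enormZ enormB /w; congr enorm.
  by apply/rowP => i; rewrite !mxE; ring.
have gw : g w <= g z + Lg * ((1 - t) * r).
  by rewrite -wz; have := g_lip w z; rewrite ler_norml; lra.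
have young := ler_young r Lg mu_gt0.
have quad : (2 * mu')^-1 * (t * r) ^+ 2 = t * ((2 * mu)^-1 * r ^+ 2).
  by rewrite mu'E; field; rewrite !gt_eqF.
apply: le_trans (moreau_le zb w mu'_gt0) _; rewrite wzb quad mu'E.
have : (1 - t) * (Lg * r) <= (1 - t) * ((2 * mu)^-1 * r ^+ 2 + mu * Lg ^+ 2 / 2).
  by rewrite ler_wpM2l ?subr_ge0 // mulrC.
have : 0 <= (2 * mu)^-1 * r ^+ 2 by rewrite mulr_ge0 ?sqr_ge0 // invr_ge0 mulr_ge0 ?ltW.
nra.
Qed.

End Moreau.

Lemma ler_of_small_slack {R : realFieldType} (a b k : R) : 0 <= k ->
  (forall t, 0 < t < 1 -> a <= b + t * k) -> a <= b.
Proof.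
move=> k_ge0 H; apply/ler_addgt0Pr => e e_gt0.
have den_gt0 : 0 < e + k + 1 by lra.
have t_gt0 : 0 < e / (e + k + 1) by rewrite divr_gt0.
have t_lt1 : e / (e + k + 1) < 1 by rewrite ltr_pdivrMr // mul1r; lra.
apply: le_trans (H (e / (e + k + 1)) _) _; first by rewrite t_gt0 t_lt1.
by rewrite lerD2l mulrAC ler_pdivrMr //; nra.
Qed.

Section Prox.
Context {R : realType} {d : nat} (phi : 'rV[R]_d -> \bar R).
Hypothesis phi_convex : econvex phi.

(* Compare [q] with the points [t z + (1 - t) q] and let [t] go to [0]. *)
Lemma prox_variational_ineq gam y q z rq rz : 0 < gam -> is_prox gam phi y q ->
  phi q = rq%:E -> phi z = rz%:E ->
  rq - rz <= gam^-1 * dotp (y - q) (q - z).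
Proof.
move=> gam_gt0 q_prox phiq phiz.
have -> : dotp (y - q) (q - z) = dotp (q - y) (z - q).
  by rewrite -(opprB q y) -(opprB z q) dotpNl dotpC dotpNl dotpC opprK.
set D := dotp (q - y) (z - q); set N := dotp (z - q) (z - q).
have k_gt0 : 0 < (2 * gam)^-1 by rewrite invr_gt0 mulr_gt0.
apply: (@ler_of_small_slack _ _ _ ((2 * gam)^-1 * N)).
  by rewrite mulr_ge0 ?dotpp_ge0 // ltW.
move=> t /[dup] t01 /andP[t_gt0 t_lt1].
have := le_trans (q_prox (t *: z + (1 - t) *: q)) (leeD2r _ (phi_convex z q t01)).
have -> : t *: z + (1 - t) *: q - y = (q - y) + t *: (z - q).
  by apply/rowP => i; rewrite !mxE; ring.
rewrite phiq phiz -!EFinM -!EFinD lee_fin sqr_enormDZ -/D -/N => cmp.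
rewrite -(ler_pM2l t_gt0).
have -> : t * (gam^-1 * D + t * ((2 * gam)^-1 * N)) =
    (2 * gam)^-1 * (2 * t * D + t * (t * N)) by field; rewrite gt_eqF.
by move: cmp; rewrite mulrDr (mulrDr (2 * gam)^-1); lra.
Qed.

Lemma prox_residual_antitone g1 g2 x v q1 q2 r1 r2 : 0 < g1 -> g1 <= g2 ->
  is_prox g1 phi (x - g1 *: v) q1 -> is_prox g2 phi (x - g2 *: v) q2 ->
  phi q1 = r1%:E -> phi q2 = r2%:E ->
  g2^-1 * enorm (x - q2) <= g1^-1 * enorm (x - q1).
Proof.
move=> g1_gt0 g12 q1_prox q2_prox phi1 phi2.
have g2_gt0 : 0 < g2 by apply: lt_le_trans g12.
have V1 := prox_variational_ineq g1_gt0 q1_prox phi1 phi2.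
have V2 := prox_variational_ineq g2_gt0 q2_prox phi2 phi1.
set a := x - q1 in V1 V2 *; set b := x - q2 in V1 V2 *.
have e1 : x - g1 *: v - q1 = a - g1 *: v by apply/rowP => i; rewrite !mxE; ring.
have e2 : x - g2 *: v - q2 = b - g2 *: v by apply/rowP => i; rewrite !mxE; ring.
have e3 : q1 - q2 = b - a by apply/rowP => i; rewrite !mxE; ring.
have e4 : q2 - q1 = a - b by apply/rowP => i; rewrite !mxE; ring.
rewrite e1 e3 in V1; rewrite e2 e4 in V2; clear e1 e2 e3 e4; clearbody a b.
rewrite !dotpBl !dotpBr !dotpZl (dotpC b a) -!sqr_enorm in V1 V2.
have cs := dotp_le_enorm a b.
have a0 := enorm_ge0 a; have b0 := enorm_ge0 b.
set P := dotp a b in V1 V2 cs; set A := enorm a in V1 V2 a0 cs *.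
set B := enorm b in V1 V2 b0 cs *.
have ginv1 : g1^-1 * g1 = 1 by rewrite mulVf // gt_eqF.
have ginv2 : g2^-1 * g2 = 1 by rewrite mulVf // gt_eqF.
(* adding the two variational inequalities cancels the [phi] and [v] terms *)
have sum_ge0 : 0 <= g1^-1 * (P - A ^+ 2) + g2^-1 * (P - B ^+ 2).
  by move: V1 V2; rewrite !mulrBr !mulrA ginv1 ginv2 !mul1r; lra.
have g12inv : g2^-1 <= g1^-1 by rewrite lef_pV2 ?posrE.
have g1inv_gt0 : 0 < g1^-1 by rewrite invr_gt0.
have g2inv_gt0 : 0 < g2^-1 by rewrite invr_gt0.
rewrite leNgt; apply/negP => lt_res.
have AB : A < B by nra.
have : g1^-1 * (A * B - A ^+ 2) + g2^-1 * (A * B - B ^+ 2) < 0.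
  have -> : g1^-1 * (A * B - A ^+ 2) + g2^-1 * (A * B - B ^+ 2) =
      (B - A) * (g1^-1 * A - g2^-1 * B) by ring.
  by rewrite pmulr_rlt0 ?subr_gt0 //; lra.
nra.
Qed.

End Prox.

Lemma lte_real_between {R : realFieldType} (a b : \bar R) : (a < b)%E ->
  exists2 r : R, (a < r%:E)%E & (r%:E < b)%E.
Proof.
case: a => [a| |]; case: b => [b| |] //=; rewrite ?lte_fin => ab.
- by exists ((a + b) / 2); rewrite lte_fin; lra.
- by exists (a + 1); rewrite ?ltey // lte_fin; lra.
- by exists (b - 1); rewrite ?ltNye // lte_fin; lra.
- by exists 0; rewrite ?ltNye ?ltey.
Qed.

Lemma quadratic_dominates_affine {R : realFieldType} (k a b : R) : 0 < k ->
  exists2 T, 0 <= T & forall u, T <= u -> a * u + b < k * u ^+ 2.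
Proof.
move=> k_gt0; pose C := `|a| + `|b| + 1.
have C_ge1 : 1 <= C by rewrite /C -lerBlDr subrr addr_ge0.
exists (C / k + 1) => [|u Tu]; first by rewrite addr_ge0 // divr_ge0; lra.
have u_ge1 : 1 <= u by apply: le_trans Tu; rewrite lerDr divr_ge0; lra.
have Cku : C <= k * u.
  by apply: (@le_trans _ _ (k * (C / k))); [rewrite mulrC divfK ?gt_eqF|
    rewrite ler_pM2l // (le_trans _ Tu) // lerDl].
have := ler_norm a; have := ler_norm b; have := normr_ge0 a; have := normr_ge0 b.
rewrite expr2 /C in Cku *; nra.
Qed.

Lemma lsc_compact_argmin {R : realType} {T : topologicalType} (f : T -> \bar R)
    (K : set T) :
  lower_semicontinuous f -> compact K -> K !=set0 ->
  exists2 q, K q & forall w, K w -> (f q <= f w)%E.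
Proof.
move=> f_lsc K_compact [k0 Kk0].
set m := ereal_inf [set f z | z in K].
have m_lb w : K w -> (m <= f w)%E by move=> Kw; apply: ereal_inf_lbound; exists w.
have [m_ey|m_ney] := eqVneq m +oo%E.
  exists k0 => // w Kw; move: (m_lb w Kw).
  by rewrite m_ey leye_eq => /eqP ->; exact: leey.
(* the sublevel sets [K `&` [f < c]], [c > m], form a proper filter on [K] *)
pose D := [set c : R | (m < c%:E)%E].
pose B c := K `&` [set z | (f z < c%:E)%E].
have [c0 mc0 _] : exists2 c : R, (m < c%:E)%E & (c%:E < +oo)%E.
  by apply: lte_real_between; rewrite ltey.
have B_filter : ProperFilter (filter_from D B).
  apply: filter_from_proper; last first.
    by move=> c /ereal_inf_lt [_ [z Kz <-] fzc]; exists z.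
  apply: filter_from_filter; first by exists c0.
  move=> i j Di Dj; exists (Num.min i j); first by rewrite /D /= EFin_min lt_min Di.
  by move=> z [Kz fz]; split; split => //; apply: lt_le_trans fz _;
    rewrite lee_fin ge_min lexx ?orbT.
have [q [Kq q_cluster]] : exists q, K q /\ cluster (filter_from D B) q.
  by apply: K_compact; exists c0 => // z [].
exists q => // w Kw; apply: le_trans (m_lb w Kw).
rewrite leNgt; apply/negP => /lte_real_between[c mc cfq].
have [V qV Vf] := f_lsc q c cfq.
have [|z [[_ fzc] Vz]] := q_cluster (B c) V _ qV; first by exists c.
by have := Vf z Vz; rewrite ltNge ltW.
Qed.

Lemma lsc_addr_continuous {R : realType} {T : topologicalType} (f : T -> \bar R)
    (q : T -> R) :
  lower_semicontinuous f -> continuous q ->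
  lower_semicontinuous (fun z => (f z + (q z)%:E)%E).
Proof.
move=> f_lsc q_cont x a afqx.
have [b bfx abq] : exists2 b : R, (b%:E < f x)%E & a < b + q x.
  move: afqx; case: (f x) => [r| |] //= => [|_].
    by rewrite -EFinD lte_fin => ar; exists ((r + a - q x) / 2); rewrite ?lte_fin; lra.
  by exists (a - q x + 1); [rewrite ltey|lra].
have [V xV Vf] := f_lsc x b bfx.
have near_q : \forall t \near x, a - b < q t.
  by apply: (@cvgr_gt R T (nbhs x) _ q (q x) (q_cont x)); lra.
exists (V `&` [set t | a - b < q t]); first exact: filterI.
move=> t [/Vf]; case: (f t) => [s| |] //= bs abt; last by rewrite ltey.
by move: bs; rewrite -EFinD !lte_fin; lra.
Qed.

Section ProxExistence.
Context {R : realType} {d : nat}.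

Definition box (z0 : 'rV[R]_d) (r : R) :=
  [set z : 'rV[R]_d | forall i, `|z 0 i - z0 0 i| <= r].

Lemma box_compact z0 r : compact (box z0 r).
Proof.
have := @rV_compact R d (fun i => `[z0 0 i - r, z0 0 i + r]%classic)
  (fun i => @segment_compact R (z0 0 i - r) (z0 0 i + r)).
by congr compact; apply/seteqP; split => z /= zP i; have := zP i;
  rewrite /= in_itv /= -ler_distl.
Qed.

Lemma box_center z0 r : 0 <= r -> box z0 r z0.
Proof. by move=> r_ge0 i; rewrite subrr normr0. Qed.

Lemma notin_box_enorm z0 r z : ~ box z0 r z -> r < enorm (z - z0).
Proof.
move=> /existsNP[i /negP]; rewrite -ltNge => ri; apply: lt_le_trans ri _.
by have := coord_le_enorm (z - z0) i; rewrite !mxE.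
Qed.

Lemma scaled_sqr_enormB_continuous (y : 'rV[R]_d) (k : R) :
  continuous (fun z : 'rV[R]_d => k * enorm (z - y) ^+ 2).
Proof.
have -> : (fun z : 'rV[R]_d => k * enorm (z - y) ^+ 2) =
    (fun z => k * \sum_i ((z 0 i - y 0 i) * (z 0 i - y 0 i))).
  by apply: funext => z; rewrite sqr_enorm dotpE; congr (_ * _);
    apply: eq_bigr => i _; rewrite !mxE.
have coord_cont i : continuous (fun z : 'rV[R]_d => z 0 i - y 0 i).
  by move=> z; apply: continuousB; [exact: coord_continuous|exact: cst_continuous].
have sum_cont : continuous (fun z : 'rV[R]_d =>
    \sum_i ((z 0 i - y 0 i) * (z 0 i - y 0 i))).
  apply: (@continuous_big R _ +%R 0 xpredT (@add_continuous R) _ (index_enum _)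
    (fun i (z : 'rV[R]_d) => (z 0 i - y 0 i) * (z 0 i - y 0 i))) => i _ z.
  exact: (@continuousM _ _ _ _ z (coord_cont i z) (coord_cont i z)).
move=> z; have := @continuousM _ _ (fun=> k) _ z (@cst_continuous _ _ k z) (sum_cont z).
exact.
Qed.

Variable phi : 'rV[R]_d -> \bar R.
Hypothesis phi_proper : proper_fun phi.
Hypothesis phi_lsc : lower_semicontinuous phi.
Hypothesis phi_convex : econvex phi.

Lemma proper_fineK z : (phi z < +oo)%E -> phi z = (fine (phi z))%:E.
Proof. by have := phi_proper.2 z; case: (phi z). Qed.

(* [phi] attains a minimum on the unit box around a point of its domain; convexity
   along the segment from that point propagates this bound with linear loss. *)
Lemma proper_lsc_convex_lb : exists z0 r0 K, phi z0 = r0%:E /\ 0 <= K /\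
  forall z, ((r0 - K * (2 + enorm (z - z0)))%:E <= phi z)%E.
Proof.
have [z0 z0_dom] := phi_proper.1; set r0 := fine (phi z0).
have phi0 : phi z0 = r0%:E by exact: proper_fineK.
have [z1 _ z1_min] := lsc_compact_argmin phi_lsc (@box_compact z0 1)
  (ex_intro _ z0 (@box_center z0 1 ler01)).
have min_le := z1_min z0 (@box_center z0 1 ler01).
have phi1 : phi z1 = (fine (phi z1))%:E.
  by apply: proper_fineK; apply: le_lt_trans min_le _; rewrite phi0 ltey.
set r1 := fine (phi z1) in phi1.
have r10 : r1 <= r0 by rewrite -lee_fin -phi0 -phi1.
exists z0, r0, (r0 - r1); split => //; split; first lra.
move=> z; set s := enorm (z - z0); have s_ge0 : 0 <= s by exact: enorm_ge0.
set lam := (2 + s)^-1.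
have lam01 : 0 < lam < 1 by rewrite invr_gt0 invf_lt1; lra.
have lamE : lam * (2 + s) = 1 by rewrite mulVf // gt_eqF //; lra.
set w := lam *: z + (1 - lam) *: z0.
have box_w : box z0 1 w.
  move=> i; have -> : w 0 i - z0 0 i = (lam *: (z - z0)) 0 i by rewrite !mxE; ring.
  apply: le_trans (coord_le_enorm _ i) _; rewrite enormZ ger0_norm -/s; last first.
    by case/andP: lam01 => /ltW.
  by rewrite -lamE ler_pM2l ?lerDr //; case/andP: lam01.
have := le_trans (z1_min w box_w) (phi_convex z z0 lam01).
rewrite phi1 phi0; have := phi_proper.2 z; case: (phi z) => [rz| |] _ //; last first.
  by move=> _; exact: leey.
rewrite -!EFinM -EFinD !lee_fin => cvx.
have : r1 * (2 + s) <= (lam * rz + (1 - lam) * r0) * (2 + s) by rewrite ler_pM2r //; lra.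
rewrite mulrDl -!mulrA (mulrC rz) (mulrC r0) !mulrA lamE mulrBl lamE mul1r.
nra.
Qed.

Lemma prox_exists gam y : 0 < gam -> exists q, is_prox gam phi y q.
Proof.
move=> gam_gt0; have [z0 [r0 [K [phi0 [K_ge0 phi_lb]]]]] := proper_lsc_convex_lb.
set k := (2 * gam)^-1; have k_gt0 : 0 < k by rewrite invr_gt0 mulr_gt0.
pose f z := (phi z + (k * enorm (z - y) ^+ 2)%:E)%E.
have f_lsc : lower_semicontinuous f.
  by apply: lsc_addr_continuous => //; exact: scaled_sqr_enormB_continuous.
set c0 := enorm (z0 - y); set Q0 := k * c0 ^+ 2.
(* beyond [T] the quadratic term beats the at most linear decay of [phi] *)
have [T T_ge0 quad] := quadratic_dominates_affine K (K * c0 + 2 * K + Q0) k_gt0.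
have far z : c0 + T < enorm (z - z0) -> (f z0 < f z)%E.
  move=> zfar; have := phi_lb z; rewrite /f phi0; have := phi_proper.2 z.
  case: (phi z) => [rz| |] _ //; last by rewrite ltey.
  rewrite -!EFinD !lee_fin lte_fin => rz_lb.
  set u := enorm (z - z0) - c0.
  have u_le : u <= enorm (z - y).
    have -> : u = enorm ((z - y) + (y - z0)) - c0.
      by rewrite /u; congr (enorm _ - _); apply/rowP => i; rewrite !mxE; ring.
    by have := ler_enormD (z - y) (y - z0); rewrite (enormB y z0) -/c0; lra.
  have u_ge0 : 0 <= u by rewrite /u; lra.
  have ku : k * u ^+ 2 <= k * enorm (z - y) ^+ 2.
    by rewrite ler_pM2l // ler_sqr // nnegrE enorm_ge0.
  have ez : enorm (z - z0) = u + c0 by rewrite subrK.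
  rewrite ez in zfar rz_lb; have := quad u; rewrite -/c0 -/Q0; lra.
have box_z0 : box z0 (c0 + T) z0 by apply: box_center; rewrite addr_ge0 // enorm_ge0.
have [q _ q_min] := lsc_compact_argmin f_lsc (@box_compact z0 (c0 + T))
  (ex_intro _ z0 box_z0).
exists q => w; have [box_w|/notin_box_enorm/far/ltW] := pselect (box z0 (c0 + T) w).
  exact: q_min.
exact: le_trans (q_min z0 box_z0).
Qed.

Lemma prox_spec gam y : 0 < gam -> is_prox gam phi y (prox gam phi y).
Proof. by move=> gam_gt0; apply: xgetPex; exact: prox_exists. Qed.

Lemma is_prox_fin gam y q : is_prox gam phi y q -> phi q = (fine (phi q))%:E.
Proof.
move=> q_prox; apply: proper_fineK; have [z0 z0_dom] := phi_proper.1.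
have := q_prox z0; case: (phi q) => [r| |] //; first by rewrite ltey.
by move: z0_dom; case: (phi z0).
Qed.

Lemma prox_dom gam y : 0 < gam -> prox gam phi y \in dom phi.
Proof.
move=> gam_gt0; rewrite inE /dom /=.
by rewrite (is_prox_fin (prox_spec y gam_gt0)) ltey.
Qed.

Lemma MresE gam F x : 0 < gam ->
  Mres gam F phi x = gam^-1 * enorm (x - prox gam phi (x - gam *: grad F x)).
Proof. by move=> gam_gt0; rewrite /Mres enormZ ger0_norm // invr_ge0 ltW. Qed.

Lemma Mres_antitone g1 g2 F x : 0 < g1 -> g1 <= g2 ->
  Mres g2 F phi x <= Mres g1 F phi x.
Proof.
move=> g1_gt0 g12; have g2_gt0 := lt_le_trans g1_gt0 g12.
have q1 := prox_spec (x - g1 *: grad F x) g1_gt0.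
have q2 := prox_spec (x - g2 *: grad F x) g2_gt0.
rewrite (MresE _ _ g1_gt0) (MresE _ _ g2_gt0).
by have := prox_residual_antitone phi_convex g1_gt0 g12 q1 q2
  (is_prox_fin q1) (is_prox_fin q2).
Qed.

End ProxExistence.

Lemma descent_sum_le {R : realDomainType} (V a : nat -> R) (Vstar : R) :
  (forall n, V n.+1 <= V n - a n) -> (forall n, Vstar <= V n) ->
  forall N, \sum_(0 <= k < N) a k <= V 0%N - Vstar.
Proof.
move=> V_step V_lb N; suff : V N <= V 0%N - \sum_(0 <= k < N) a k.
  by have := V_lb N; lra.
elim: N => [|N IH]; first by rewrite big_geq // subr0.
by rewrite big_nat_recr //=; have := V_step N; lra.
Qed.

Lemma frequently_le_of_weighted_sum {R : realType} (w b : nat -> R) (W : R) :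
  (forall n, 0 <= w n) -> (fun n => \sum_(0 <= k < n) w k) @ \oo --> +oo ->
  (forall N, \sum_(0 <= k < N) w k * b k ^+ 2 <= W) ->
  forall e, 0 < e -> forall n, exists2 k, (n <= k)%N & b k <= e.
Proof.
move=> w_ge0 w_div sum_le e e_gt0 n.
have [//|b_gt] := pselect (exists2 k, (n <= k)%N & b k <= e); exfalso.
have {}b_gt k : (n <= k)%N -> e < b k.
  by move=> nk; rewrite ltNge; apply/negP => bk; apply: b_gt; exists k.
have tail_le N : (n <= N)%N -> e ^+ 2 * \sum_(n <= k < N) w k <= W.
  move=> nN; apply: le_trans (sum_le N).
  rewrite (@big_cat_nat _ _ _ n 0 _ _ _ (leq0n n) nN) /= -[X in X <= _]add0r.
  apply: lerD; first by apply: sumr_ge0 => k _; rewrite mulr_ge0 ?sqr_ge0.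
  rewrite mulr_sumr; apply: ler_sum_nat => k /andP[nk _]; rewrite mulrC ler_wpM2l //.
  by have bk := b_gt k nk; rewrite ler_sqr ?nnegrE; lra.
have e2_gt0 : 0 < e ^+ 2 by exact: exprn_gt0.
move/cvgryPge: w_div => /(_ (\sum_(0 <= k < n) w k + W / e ^+ 2 + 1))[N0 _ N0_big].
have nN : (n <= maxn N0 n)%N by rewrite leq_maxr.
have := N0_big _ (leq_maxl N0 n).
rewrite /= (@big_cat_nat _ _ _ n 0 _ _ _ (leq0n n) nN) /=.
have : \sum_(n <= k < maxn N0 n) w k <= W / e ^+ 2.
  by rewrite ler_pdivlMr // mulrC; exact: tail_le.
lra.
Qed.

Lemma limn_einf_eq0 {R : realType} (b : nat -> R) : (forall n, 0 <= b n) ->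
  (forall e, 0 < e -> forall n, exists2 k, (n <= k)%N & b k <= e) ->
  limn_einf (fun n => (b n)%:E) = 0%E.
Proof.
move=> b_ge0 b_small; rewrite limn_einf_lim.
have -> : einfs (fun n => (b n)%:E) = fun=> 0%E; last exact: lim_cst.
apply: funext => n; apply/eqP; rewrite eq_le; apply/andP; split.
  apply/lee_addgt0Pr => e e_gt0; rewrite add0e; apply: ge_ereal_inf.
  by have [k nk bk] := b_small e e_gt0 n; exists (b k)%:E; [exists k|rewrite lee_fin].
by apply: le_ereal_inf_tmp => _ [k _ <-]; rewrite lee_fin.
Qed.

Lemma stepsize_lb {R : realFieldType} (beta v1 v2 mu mumax : R) :
  0 < beta -> 0 <= v1 -> 0 < v2 -> 0 < mu <= mumax ->
  beta / (v1 * mumax + v2) * mu <= beta / (v1 + v2 / mu).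
Proof.
move=> beta_gt0 v1_ge0 v2_gt0 /andP[mu_gt0 mu_le].
have den_gt0 : 0 < v1 * mu + v2 by rewrite ltr_wpDl // mulr_ge0 // ltW.
have -> : beta / (v1 + v2 / mu) = beta / (v1 * mu + v2) * mu.
  by field; rewrite !gt_eqF.
have le_den : v1 * mu + v2 <= v1 * mumax + v2 by rewrite lerD2r ler_wpM2l.
by rewrite ler_pM2r // ler_pM2l // lef_pV2 ?posrE ?(lt_le_trans den_gt0 le_den).
Qed.

Section SmoothedProxGradient.
Variables (R : realType) (m p : nat) (phi : 'rV[R]_m -> \bar R) (h : 'rV[R]_m -> R)
  (S : 'rV[R]_m -> 'rV[R]_p) (g : 'rV[R]_p -> R) (Lg : R).
Hypothesis phi_proper : proper_fun phi.
Hypothesis phi_lsc : lower_semicontinuous phi.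
Hypothesis phi_convex : econvex phi.
Hypothesis g_lip : forall z z', `|g z - g z'| <= Lg * enorm (z - z').
Hypothesis argmin_ne : exists xs, forall x,
  ((h xs + g (S xs))%:E + phi xs <= (h x + g (S x))%:E + phi x)%E.

Variables (x : nat -> 'rV[R]_m) (mu gamma : nat -> R) (c kap gbar : R).
Let F n := Fmu (mu n) h g S.
Let Mres_n n := Mres (gamma n) (F n) phi (x n).
Hypothesis mu_gt0 : forall n, 0 < mu n.
Hypothesis mu_dec : forall n, mu n.+1 <= mu n.
Hypothesis gamma_gt0 : forall n, 0 < gamma n.
Hypothesis x0_dom : x 0%N \in dom phi.
Let step n :=
  prox (gamma n) phi (x n - gamma n *: grad (F n : 'rV[R]_m -> R^o) (x n)).
Hypothesis x_next : forall n, x n.+1 = step n.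
Hypothesis descent : forall n,
  ((F n (step n))%:E + phi (step n)
     <= (F n (x n))%:E + phi (x n) - (c * gamma n * Mres_n n ^+ 2)%:E)%E.

Let phi_x_fin n : phi (x n) = (fine (phi (x n)))%:E.
Proof.
apply: (proper_fineK phi_proper); suff : x n \in dom phi by rewrite inE.
by case: n => // n; rewrite x_next prox_dom.
Qed.

Let V n := F n (x n) + fine (phi (x n)) + mu n * Lg ^+ 2 / 2.

Let V_decrease n : V n.+1 <= V n - c * gamma n * Mres_n n ^+ 2.
Proof.
have := descent n; rewrite -x_next (phi_x_fin n) (phi_x_fin n.+1) -!EFinD lee_fin.
have := moreau_le_shrink g_lip (S (x n.+1)) (mu_gt0 n.+1) (mu_dec n).
rewrite /V /F /Fmu.
(* left as opaque atoms, the envelope values are not unfolded by [lra] *)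
move: (moreau (mu n.+1) g (S (x n.+1))) (moreau (mu n) g (S (x n.+1)))
  (moreau (mu n) g (S (x n))) => M1 M01 M0.
lra.
Qed.

Let V_lb : exists Vstar, forall n, Vstar <= V n.
Proof.
have [xs xs_min] := argmin_ne.
have phi_xs : phi xs = (fine (phi xs))%:E.
  apply: (proper_fineK phi_proper); have := xs_min (x 0%N); rewrite (phi_x_fin 0).
  by case: (phi xs) => // r _; rewrite ltey.
exists (h xs + g (S xs) + fine (phi xs)); move=> n.
have := xs_min (x n); rewrite (phi_x_fin n) phi_xs -!EFinD lee_fin.
have := moreau_ge g_lip (S (x n)) (mu_gt0 n).
by rewrite /V /F /Fmu; lra.
Qed.

Hypothesis c_gt0 : 0 < c.
Hypothesis kap_gt0 : 0 < kap.
Hypothesis gamma_lb : forall n, kap * mu n <= gamma n.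
Hypothesis gamma_le : forall n, gamma n <= gbar.

Lemma weighted_residual_sum_bounded : exists W, forall N,
  \sum_(0 <= k < N) mu k * Mres gbar (F k) phi (x k) ^+ 2 <= W.
Proof.
have [Vstar V_ge] := V_lb.
exists ((V 0%N - Vstar) / (c * kap)) => N; rewrite ler_pdivlMr ?mulr_gt0 //.
rewrite mulr_suml; apply: le_trans (descent_sum_le V_decrease V_ge N).
apply: ler_sum_nat => k _.
have res_le : Mres gbar (F k) phi (x k) <= Mres_n k.
  by rewrite /Mres_n; apply: Mres_antitone.
have res_ge0 : 0 <= Mres gbar (F k) phi (x k) by exact: enorm_ge0.
move: res_le res_ge0; set r := Mres gbar _ _ _; set s := Mres_n k.
clearbody r s => res_le res_ge0.
rewrite (_ : _ * (c * kap) = c * (kap * mu k) * r ^+ 2); last by ring.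
apply: ler_pM.
- by rewrite mulr_ge0 ?ltW // mulr_gt0.
- exact: sqr_ge0.
- by rewrite ler_pM2l.
- by rewrite ler_sqr ?nnegrE // (le_trans res_ge0).
Qed.

End SmoothedProxGradient.

Unset Implicit Arguments. Set Strict Implicit.

Theorem theorem2 (R : realType) (m p : nat)
  (phi : 'rV[R]_m -> \bar R) (h : 'rV[R]_m -> R)
  (S : 'rV[R]_m -> 'rV[R]_p) (g : 'rV[R]_p -> R)
  (Lh Lg eta : R)
  (* standing setup *)
  (phi_proper : proper_fun phi)
  (phi_lsc : lower_semicontinuous phi)
  (phi_convex : econvex phi)
  (h_diff : forall x, differentiable (h : 'rV[R]_m -> R^o) x)
  (h_lip : forall x y, x \in dom phi -> y \in dom phi ->
     enorm (grad (h : 'rV[R]_m -> R^o) x - grad (h : 'rV[R]_m -> R^o) y)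
       <= Lh * enorm (x - y))
  (S_diff : forall x, differentiable S x)
  (S_C1 : forall i : 'I_m, continuous (fun x => 'd S x (delta_mx 0 i : 'rV[R]_m)))
  (Lg_pos : 0 < Lg)
  (g_lip : forall z z', `|g z - g z'| <= Lg * enorm (z - z'))
  (eta_pos : 0 < eta)
  (g_weak : rconvex (fun z => g z + eta / 2 * enorm z ^+ 2))
  (argmin_ne : exists xs, forall x,
     ((h xs + g (S xs))%:E + phi xs <= (h x + g (S x))%:E + phi x)%E)
  (* algorithm and assumptions *)
  (x : nat -> 'rV[R]_m) (c : R) (mu gamma : nat -> R)
  (M varpi1 varpi2 beta gbar : R)
  (x0_dom : x 0%N \in dom phi)
  (c_range : 0 < c < 1)
  (* (a) *)
  (mu_range : forall n, 0 < mu n <= (2 * eta)^-1)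
  (mu_to0 : mu @ \oo --> 0)
  (mu_sum : (fun n => \sum_(0 <= k < n) mu k) @ \oo --> +oo)
  (M_ge1 : 1 <= M)
  (mu_ratio : forall n, M^-1 <= mu n.+1 / mu n <= 1)
  (* (b) *)
  (varpi1_ge0 : 0 <= varpi1) (varpi2_pos : 0 < varpi2)
  (gradF_lip : forall n y z, y \in dom phi -> z \in dom phi ->
     enorm (grad (Fmu (mu n) h g S : 'rV[R]_m -> R^o) y
            - grad (Fmu (mu n) h g S : 'rV[R]_m -> R^o) z)
       <= (varpi1 + varpi2 / mu n) * enorm (y - z))
  (* (c) *)
  (beta_pos : 0 < beta) (gbar_pos : 0 < gbar)
  (gamma_pos : forall n, 0 < gamma n)
  (descent : forall n,
     ((Fmu (mu n) h g S (prox (gamma n) phi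
          (x n - gamma n *: grad (Fmu (mu n) h g S : 'rV[R]_m -> R^o) (x n))))%:E
      + phi (prox (gamma n) phi
          (x n - gamma n *: grad (Fmu (mu n) h g S : 'rV[R]_m -> R^o) (x n)))
      <= (Fmu (mu n) h g S (x n))%:E + phi (x n)
         - (c * gamma n * Mres (gamma n) (Fmu (mu n) h g S) phi (x n) ^+ 2)%:E)%E)
  (gamma_range : forall n,
     beta / (varpi1 + varpi2 / mu n) <= gamma n <= gbar)
  (* (d) *)
  (x_next : forall n, x n.+1 =
     prox (gamma n) phi
       (x n - gamma n *: grad (Fmu (mu n) h g S : 'rV[R]_m -> R^o) (x n))) :
  limn_einf (fun n => (Mres gbar (Fmu (mu n) h g S) phi (x n))%:E) = 0%E.
Proof.
have mu_gt0 n : 0 < mu n by case/andP: (mu_range n).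
have mu_dec n : mu n.+1 <= mu n.
  by case/andP: (mu_ratio n) => _; rewrite ler_pdivrMr // mul1r.
have c_gt0 : 0 < c by case/andP: c_range.
have gamma_le n : gamma n <= gbar by case/andP: (gamma_range n).
have kap_gt0 : 0 < beta / (varpi1 * (2 * eta)^-1 + varpi2).
  by rewrite divr_gt0 // ltr_wpDl // mulr_ge0 // invr_ge0 mulr_ge0 // ltW.
have gamma_lb n : beta / (varpi1 * (2 * eta)^-1 + varpi2) * mu n <= gamma n.
  by case/andP: (gamma_range n) => + _; apply: le_trans; exact: stepsize_lb.
have [W sum_le] := weighted_residual_sum_bounded phi_proper phi_lsc phi_convex g_lip
  argmin_ne mu_gt0 mu_dec gamma_pos x0_dom x_next descent c_gt0 kap_gt0 gamma_lb gamma_le.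
apply: limn_einf_eq0 => [n|]; first exact: enorm_ge0.
exact: frequently_le_of_weighted_sum (fun n => ltW (mu_gt0 n)) mu_sum sum_le.
Qed.
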